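(* Let $(\mathcal{A},[\cdot,\cdot],\varepsilon,\alpha)$ be a multiplicative color Hom-Lie algebra and $(M,[\cdot,\cdot]_M,\beta)$ an $\mathcal{A}$-module. Then for all integers $n\ge 2$ and $r\ge 1$, $\delta^n_r\circ\delta^{n-1}_r=0$ on $C^{n-1}_{\alpha,\beta}(\mathcal{A},M)$; i.e. $(\bigoplus_{n\ge 0}C^n_{\alpha,\beta}(\mathcal{A},M),\delta_r)$ is a cochain complex.
   Context: Let $\mathbb{K}$ be a field of characteristic $0$, $\Gamma$ an abelian group and $\varepsilon:\Gamma\times\Gamma\to\mathbb{K}^*$ a skew-symmetric bicharacter ($\varepsilon(a,b)\varepsilon(b,a)=1$, $\varepsilon(a,b+c)=\varepsilon(a,b)\varepsilon(a,c)$, $\varepsilon(a+b,c)=\varepsilon(a,c)\varepsilon(b,c)$); for homogeneous $x,y$, $\varepsilon(x,y)=\varepsilon(\bar x,\bar y)$ with $\bar x$ the degree, and for sums of elements $\varepsilon(x_1+\dots+x_k,y)$ means $\varepsilon(\bar x_1+\dots+\bar x_k,\bar y)$. A color Hom-Lie algebra is $(\mathcal{A},[\cdot,\cdot],\varepsilon,\alpha)$ with $\mathcal{A}$ a $\Gamma$-graded vector space, $[\cdot,\cdot]$ bilinear with $[\mathcal{A}_a,\mathcal{A}_b]\subseteq\mathcal{A}_{a+b}$, $\alpha$ even linear, $[x,y]=-\varepsilon(x,y)[y,x]$ and $\varepsilon(z,x)[\alpha(x),[y,z]]+\varepsilon(x,y)[\alpha(y),[z,x]]+\varepsilon(y,z)[\alpha(z),[x,y]]=0$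 for homogeneous $x,y,z$; it is multiplicative if $\alpha([x,y])=[\alpha(x),\alpha(y)]$. An $\mathcal{A}$-module is a triple $(M,[\cdot,\cdot]_M,\beta)$ with $M$ a $\Gamma$-graded vector space, $\beta:M\to M$ even linear and $[\cdot,\cdot]_M:\mathcal{A}\times M\to M$ bilinear with $[\mathcal{A}_a,M_b]\subseteq M_{a+b}$, such that $\beta([x,m]_M)=[\alpha(x),\beta(m)]_M$ and $[[x,y],\beta(m)]_M=[\alpha(x),[y,m]_M]_M-\varepsilon(x,y)[\alpha(y),[x,m]_M]_M$ for homogeneous $x,y$ and $m\in M$. $C^n(\mathcal{A},M)$ is the space of $n$-linear maps $f:\mathcal{A}^n\to M$ with $f(\dots,x_i,x_{i+1},\dots)=-\varepsilon(x_i,x_{i+1})f(\dots,x_{i+1},x_i,\dots)$ for homogeneous arguments; $f$ has degree $\gamma$ if it maps arguments of degrees $a_1,\dots,a_n$ into $M_{\gamma+a_1+\dots+a_n}$. $C^n_{\alpha,\beta}(\mathcal{A},M)=\{f\in C^n(\mathcal{A},M): f(\alpha(x_1),\dots,\alpha(x_n))=\beta(f(x_1,\dots,x_n))\}$. For $f\in C^n_{\alpha,\beta}(\mathcal{A},M)$ homogeneous of degree $\gamma$ and homogeneous $x_0,\dots,x_n$, define (and extend linearly) $$\delta^n_r(f)(x_0,\dots,x_n)=\sum_{0\le s<t\le n}(-1)^t\varepsilon(x_{s+1}+\dots+x_{t-1},x_t)\,f\big(\alpha(x_0),\dots,\alpha(x_{s-1}),[x_s,x_t],\alpha(x_{s+1}),\dots,\widehat{x_t},\dots,\alpha(x_n)\big)$$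 $$+\sum_{s=0}^n(-1)^s\varepsilon(\gamma+x_0+\dots+x_{s-1},x_s)\,[\alpha^{r+n-1}(x_s),f(x_0,\dots,\widehat{x_s},\dots,x_n)]_M,$$ where $\widehat{\cdot}$ denotes omission. *)

From HB Require Import structures.
From mathcomp Require Import all_boot all_order all_algebra.
Set Implicit Arguments. Unset Strict Implicit. Unset Printing Implicit Defensive.
Import Order.TTheory GRing.Theory Num.Theory.
Local Open Scope ring_scope.

(* Conventions.
   - K is a field, Gamma an abelian group (zmodType).
   - A Gamma-graded K-vector space is a K-module V together with a family
     H : Gamma -> pred V of subspaces (H a = the homogeneous component V_a)
     such that V is their (internal) direct sum.
   - Homogeneous elements are handled as tagged pairs (a, x) with x \in V_a;
     the tag a is the degree used in the color factors eps.
   - An n-cochain is a function f : seq V -> M, only its values on lists of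
     length n matter. *)

Section Defs.
Variables (K : fieldType) (Gamma : zmodType).

Definition is_subspace (V : lmodType K) (P : pred V) : Prop :=
  P 0 /\ (forall (k : K) (u v : V), P u -> P v -> P (k *: u + v)).

Definition is_grading (V : lmodType K) (H : Gamma -> pred V) : Prop :=
  [/\ forall a, is_subspace (H a),
      forall v : V, exists s : seq (Gamma * V),
        [/\ uniq (map fst s), all (fun p => H p.1 p.2) s & v = \sum_(p <- s) p.2]
    & forall s : seq (Gamma * V),
        uniq (map fst s) -> all (fun p => H p.1 p.2) s ->
        \sum_(p <- s) p.2 = 0 -> all (fun p => p.2 == 0) s].

Definition is_linear (U V : lmodType K) (f : U -> V) : Prop :=
  forall (k : K) (u v : U), f (k *: u + v) = k *: f u + f v.

Definition is_bilinear (U V W : lmodType K) (g : U -> V -> W) : Prop :=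
  (forall u, is_linear (g u)) /\ (forall v, is_linear (fun u => g u v)).

Definition skew_bicharacter (eps : Gamma -> Gamma -> K) : Prop :=
  [/\ forall a b, eps a b != 0,
      forall a b, eps a b * eps b a = 1,
      forall a b c, eps a (b + c) = eps a b * eps a c
    & forall a b c, eps (a + b) c = eps a c * eps b c].

Definition even_map (V : lmodType K) (H : Gamma -> pred V) (f : V -> V) : Prop :=
  forall a x, H a x -> H a (f x).

Definition multiplicative_color_HomLie (eps : Gamma -> Gamma -> K)
    (A : lmodType K) (HA : Gamma -> pred A) (br : A -> A -> A) (alpha : A -> A)
    : Prop :=
  [/\ is_grading HA, is_bilinear br, is_linear alpha, even_map HA alpha &
      (forall a b x y, HA a x -> HA b y -> HA (a + b) (br x y))] /\
  [/\ (forall a b x y, HA a x -> HA b y -> br x y = - (eps a b *: br y x)),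
      (forall a b c x y z, HA a x -> HA b y -> HA c z ->
         eps c a *: br (alpha x) (br y z) + eps a b *: br (alpha y) (br z x)
         + eps b c *: br (alpha z) (br x y) = 0)
    & (forall x y, alpha (br x y) = br (alpha x) (alpha y))].

Definition HomLie_module (eps : Gamma -> Gamma -> K)
    (A : lmodType K) (HA : Gamma -> pred A) (br : A -> A -> A) (alpha : A -> A)
    (M : lmodType K) (HM : Gamma -> pred M) (act : A -> M -> M) (beta : M -> M)
    : Prop :=
  [/\ is_grading HM, is_bilinear act, is_linear beta, even_map HM beta &
      (forall a b x m, HA a x -> HM b m -> HM (a + b) (act x m))] /\
  [/\ (forall a x m, HA a x -> beta (act x m) = act (alpha x) (beta m))
    & (forall a b x y m, HA a x -> HA b y ->
         act (br x y) (beta m)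
         = act (alpha x) (act y m) - eps a b *: act (alpha y) (act x m))].

Definition sumdeg (A : Type) (xs : seq (Gamma * A)) : Gamma :=
  \sum_(p <- xs) p.1.

Definition homog (A : lmodType K) (HA : Gamma -> pred A)
    (xs : seq (Gamma * A)) : bool :=
  all (fun p => HA p.1 p.2) xs.

Definition cochain_ab (eps : Gamma -> Gamma -> K)
    (A : lmodType K) (HA : Gamma -> pred A) (alpha : A -> A)
    (M : lmodType K) (HM : Gamma -> pred M) (beta : M -> M)
    (n : nat) (gam : Gamma) (f : seq A -> M) : Prop :=
  [/\
      (forall (xs : seq A) (i : nat) (k : K) (u v : A),
         size xs = n -> (i < n)%N ->
         f (set_nth 0 xs i (k *: u + v))
         = k *: f (set_nth 0 xs i u) + f (set_nth 0 xs i v)),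
      (forall (xs : seq (Gamma * A)) (i : nat),
         size xs = n -> (i.+1 < n)%N -> homog HA xs ->
         let x := nth (0, 0) xs i in let y := nth (0, 0) xs i.+1 in
         f (map snd xs)
         = - (eps x.1 y.1 *: f (map snd (take i xs ++ y :: x :: drop i.+2 xs)))),
      (forall xs : seq (Gamma * A), size xs = n -> homog HA xs ->
         HM (gam + sumdeg xs) (f (map snd xs)))
    &
      (forall xs : seq A, size xs = n -> f (map alpha xs) = beta (f xs))].

Definition delta (eps : Gamma -> Gamma -> K)
    (A : lmodType K) (br : A -> A -> A) (alpha : A -> A)
    (M : lmodType K) (act : A -> M -> M)
    (r n : nat) (gam : Gamma) (f : seq (Gamma * A) -> M)
    (xs : seq (Gamma * A)) : M :=
  let x i := nth (0, 0) xs i in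
  \sum_(t < n.+1) \sum_(s < t)
     ((-1) ^+ t * eps (\sum_(s.+1 <= i < t) (x i).1) (x t).1) *:
       f [seq (if i == val s then ((x s).1 + (x t).1, br (x s).2 (x t).2)
               else ((x i).1, alpha (x i).2))
         | i <- iota 0 n.+1 & i != val t]
  + \sum_(s < n.+1)
     ((-1) ^+ s * eps (gam + \sum_(0 <= i < s) (x i).1) (x s).1) *:
       act (iter (r + n).-1 alpha (x s).2)
           (f [seq x i | i <- iota 0 n.+1 & i != val s]).

End Defs.

From HB Require Import structures.
From mathcomp Require Import all_boot all_order all_algebra.
From mathcomp Require Import zify ring.
Set Implicit Arguments. Unset Strict Implicit. Unset Printing Implicit Defensive.
Import Order.TTheory GRing.Theory Num.Theory.
Local Open Scope ring_scope.

(* The arguments x_0, ..., x_(m+1) of the double coboundary are encoded by a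
   function X : nat -> Gamma * A (degree and element); removing the entry t
   from the list 0, ..., n is described by the map bump t, and its inverse
   on the remaining indices by unbump t.  After rewriting delta in terms of X
   (delta_mkseq), delta^(m+1) (delta^m f) X splits into four families of terms,
   named after the part of the formula used by the outer and the inner
   coboundary, B for the bracket part and A for the action part:
   - the AA terms cancel against the BA terms whose action hits the freshly
     formed bracket [x_s, x_t]: this is the module axiom
     [[x,y], beta v] = [alpha x, [y, v]] - eps(x,y) [alpha y, [x, v]]
     together with f o alpha = beta o f;
   - every other BA term cancels against exactly one AB term;
   - among the BB terms, those in which the two brackets share an argument
     group into triples that vanish by the eps-Jacobi identity, while those
     with disjoint brackets cancel in pairs; their sum S satisfies S = - S,
     so it vanishes since the characteristic of K is not 2. *)

Lemma filter_iota_bump m t : (t <= m)%N ->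
  [seq i <- iota 0 m.+1 | i != t] = map (bump t) (iota 0 m).
Proof.
elim: m t => [|m IH] t ht.
  by move: ht; rewrite leqn0 => /eqP->.
rewrite -addn1 iotaD filter_cat add0n [X in _ ++ X]/=.
have [->|ne] := eqVneq t m.+1.
  rewrite [X in _ ++ X]/= cats0 [RHS]map_id_in.
    apply/all_filterP; apply/allP => i; rewrite mem_iota => /andP[_ hi].
    by apply/negP=> /eqP ?; subst; rewrite ltnn in hi.
  by move=> i; rewrite mem_iota /bump => /andP[_ hi]; rewrite leqNgt hi.
have htm : (t <= m)%N by lia.
rewrite [X in _ ++ X]/= (IH t htm) -addn1 iotaD map_cat add0n.
by congr (_ ++ _); rewrite /= /bump htm addn1.
Qed.

Lemma filter_map_bump (T : Type) (h : nat -> T) m t : (t <= m)%N ->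
  [seq h i | i <- iota 0 m.+1 & i != t] = mkseq (fun j => h (bump t j)) m.
Proof. by move=> ht; rewrite filter_iota_bump // -map_comp. Qed.

Lemma eq_in_mkseq (T : Type) (F1 F2 : nat -> T) m :
  (forall j, (j < m)%N -> F1 j = F2 j) -> mkseq F1 m = mkseq F2 m.
Proof.
move=> h; apply/eq_in_map => j.
by rewrite mem_iota => /andP[_]; apply: h.
Qed.

Lemma map_mkseq (T U : Type) (g : T -> U) (F : nat -> T) n :
  map g (mkseq F n) = mkseq (fun j => g (F j)) n.
Proof. by rewrite /mkseq -map_comp. Qed.

Lemma bump_bump s t k : (s < t)%N -> bump s (bump t.-1 k) = bump t (bump s k).
Proof. rewrite /bump; lia. Qed.

Lemma unbump_lt h i : (i < h)%N -> unbump h i = i.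
Proof. rewrite /unbump; lia. Qed.

Lemma unbump_gt h i : (h < i)%N -> unbump h i = i.-1.
Proof. rewrite /unbump; lia. Qed.

Section SumReindexing.
Variable V : nmodType.

Lemma sum_triangle N (F : nat -> nat -> V) :
  \sum_(t < N) \sum_(s < t) F s t =
  \sum_(t < N) \sum_(s < N) (if (s < t)%N then F s t else 0).
Proof.
apply: eq_bigr => -[t ht] _ /=.
by rewrite (big_ord_widen N (fun s => F s t)) ?big_mkcond //; lia.
Qed.

Lemma sum_skip N t (F : nat -> V) : (t <= N)%N ->
  \sum_(j < N) F j =
  \sum_(i < N.+1) (if (i == t :> nat) then 0 else F (unbump t i)).
Proof.
move=> ht; have ht' : (t < N.+1)%N by lia.
rewrite (bigD1_ord (Ordinal ht')) //= eqxx add0r.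
by apply: eq_bigr => i _ /=; rewrite bumpK eq_sym (negbTE (neq_bump _ _)).
Qed.

Lemma sum_ord_pick N s (F : nat -> V) : (s < N)%N ->
  \sum_(u < N) (if (u == s :> nat) then F u else 0) = F s.
Proof.
move=> hs; rewrite (bigD1_ord (Ordinal hs)) //= eqxx big1 ?addr0 // => i _.
by rewrite /= eq_sym (negbTE (neq_bump _ _)).
Qed.

Lemma sum_nat_pick lo hi s (c : V) :
  \sum_(lo <= k < hi) (if k == s then c else 0) =
  if (lo <= s < hi)%N then c else 0.
Proof.
elim: hi => [|hi IH]; first by rewrite big_geq //; case: ifP => //; lia.
have [le|lt] := leqP lo hi; last by rewrite big_geq //; case: ifP => //; lia.
rewrite big_nat_recr //= IH.
case: eqP => [e|ne]; first subst.
  rewrite (_ : (lo <= s < s)%N = false) ?add0r; last by lia.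
  by rewrite (_ : (lo <= s < s.+1)%N = true) //; lia.
by rewrite addr0 (_ : (lo <= s < hi.+1)%N = (lo <= s < hi)%N) //; lia.
Qed.

Lemma sum_bump_mid (F : nat -> V) lo hi w : (lo <= w <= hi)%N ->
  \sum_(lo <= k < hi) F (bump w k) =
  \sum_(lo <= i < w) F i + \sum_(w.+1 <= i < hi.+1) F i.
Proof.
move=> /andP[h1 h2]; rewrite (big_cat_nat h1 h2) /= big_add1 /=.
by congr (_ + _); apply: eq_big_nat => k /andP[hk hk']; rewrite /bump; congr F; lia.
Qed.

Lemma sum_bump_lo (F : nat -> V) lo hi w : (hi <= w)%N ->
  \sum_(lo <= k < hi) F (bump w k) = \sum_(lo <= k < hi) F k.
Proof. by move=> h; apply: eq_big_nat => k /andP[_ hk]; rewrite /bump; congr F; lia. Qed.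

Lemma sum_bump_hi (F : nat -> V) lo hi w : (w <= lo)%N ->
  \sum_(lo <= k < hi) F (bump w k) = \sum_(lo.+1 <= i < hi.+1) F i.
Proof.
move=> h; rewrite big_add1 /=.
by apply: eq_big_nat => k /andP[hk _]; rewrite /bump; congr F; lia.
Qed.

Lemma sum_split_pt (F : nat -> V) lo w hi : (lo <= w < hi)%N ->
  \sum_(lo <= i < hi) F i =
  \sum_(lo <= i < w) F i + (F w + \sum_(w.+1 <= i < hi) F i).
Proof.
move=> /andP[h1 h2].
by rewrite (big_cat_nat h1 (ltnW h2)) /= [\sum_(w <= i < hi) _]big_ltn.
Qed.

Lemma sum4_swap N (H : nat -> nat -> nat -> nat -> V) :
  \sum_(t < N) \sum_(s < N) \sum_(b < N) \sum_(a < N) H t s b a =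
  \sum_(t < N) \sum_(s < N) \sum_(b < N) \sum_(a < N) H b a t s.
Proof.
under eq_bigr => t _ do rewrite exchange_big.
under eq_bigr => t _ do under eq_bigr => b _ do rewrite exchange_big.
rewrite exchange_big.
by under eq_bigr => b _ do rewrite exchange_big.
Qed.

Lemma sum4_split3 N (F F1 F2 F3 : nat -> nat -> nat -> nat -> V) :
  (forall t s b a, F t s b a = F1 t s b a + F2 t s b a + F3 t s b a) ->
  \sum_(t < N) \sum_(s < N) \sum_(b < N) \sum_(a < N) F t s b a =
  \sum_(t < N) \sum_(s < N) \sum_(b < N) \sum_(a < N) F1 t s b a +
  \sum_(t < N) \sum_(s < N) \sum_(b < N) \sum_(a < N) F2 t s b a +
  \sum_(t < N) \sum_(s < N) \sum_(b < N) \sum_(a < N) F3 t s b a.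
Proof.
move=> h; rewrite -!big_split; apply: eq_bigr => t _; rewrite -!big_split.
apply: eq_bigr => s _; rewrite -!big_split; apply: eq_bigr => b _.
by rewrite -!big_split; apply: eq_bigr => a _; rewrite h.
Qed.

Lemma if_split3 (C p q : bool) (g : V) : (C -> ~~ (p && q)) ->
  (if C then g else 0) =
  (if C && p then g else 0) + (if C && q then g else 0)
  + (if [&& C, ~~ p & ~~ q] then g else 0).
Proof.
by case: C; case: p; case: q => /= h; rewrite ?addr0 ?add0r //; move: (h isT).
Qed.

End SumReindexing.

Lemma scale3_perm (R : pzRingType) (V : lmodType R) (l1 l2 l3 k1 k2 k3 : R)
    (v1 v2 v3 : V) :
  l1 = k1 -> l2 = k2 -> l3 = k3 ->
  l3 *: v3 + l2 *: v2 + l1 *: v1 = k1 *: v1 + k2 *: v2 + k3 *: v3.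
Proof. by move=> -> -> ->; rewrite addrC (addrC (k3 *: v3)) addrA. Qed.

Section CoboundaryOnFunctions.
Variables (K : fieldType) (Gamma : zmodType) (eps : Gamma -> Gamma -> K)
  (A : lmodType K) (br : A -> A -> A) (alpha : A -> A)
  (M : lmodType K) (act : A -> M -> M) (r : nat) (gam : Gamma).

Definition contract (Z : nat -> Gamma * A) (s t : nat) : nat -> Gamma * A :=
  fun j => if j == s then ((Z s).1 + (Z t).1, br (Z s).2 (Z t).2)
           else ((Z (bump t j)).1, alpha (Z (bump t j)).2).

Definition coef_br (Z : nat -> Gamma * A) (s t : nat) : K :=
  (-1) ^+ t * eps (\sum_(s.+1 <= i < t) (Z i).1) (Z t).1.

Definition coef_act (Z : nat -> Gamma * A) (s : nat) : K :=
  (-1) ^+ s * eps (gam + \sum_(0 <= i < s) (Z i).1) (Z s).1.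

Lemma delta_mkseq m (g : seq (Gamma * A) -> M) Z :
  delta eps br alpha act r m gam g (mkseq Z m.+1) =
  \sum_(t < m.+1) \sum_(s < t) coef_br Z s t *: g (mkseq (contract Z s t) m)
  + \sum_(s < m.+1) coef_act Z s *: act (iter (r + m).-1 alpha (Z s).2)
                                     (g (mkseq (fun j => Z (bump s j)) m)).
Proof.
rewrite /delta; congr (_ + _); apply: eq_bigr => -[t ht] _ /=.
  apply: eq_bigr => -[s hs] _ /=.
  rewrite /coef_br (@eq_big_nat _ _ _ _ _ _ (fun i => (Z i).1)); last first.
    by move=> i /andP[_ hi]; rewrite nth_mkseq //; lia.
  rewrite nth_mkseq // filter_map_bump; last by lia.
  congr (_ *: g _); apply: eq_in_mkseq => j hj; rewrite /contract.
  have -> : (bump t j == s) = (j == s) by rewrite /bump; lia.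
  by case: ifP => _; rewrite !nth_mkseq // /bump; lia.
rewrite /coef_act (@eq_big_nat _ _ _ _ _ _ (fun i => (Z i).1)); last first.
  by move=> i /andP[_ hi]; rewrite nth_mkseq //; lia.
rewrite nth_mkseq // filter_map_bump; last by lia.
congr (_ *: act _ (g _)); apply: eq_in_mkseq => j hj.
by rewrite nth_mkseq // /bump; lia.
Qed.

Lemma sum_contract_deg (Z : nat -> Gamma * A) lo hi s t : (s < t)%N ->
  \sum_(lo <= k < hi) (contract Z s t k).1 =
  \sum_(lo <= k < hi) (Z (bump t k)).1 + (if (lo <= s < hi)%N then (Z t).1 else 0).
Proof.
move=> hst; rewrite -sum_nat_pick -big_split /=; apply: eq_big_nat => k _.
rewrite /contract; case: eqP => [->|_]; last by rewrite addr0.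
by rewrite /bump (_ : (t <= s)%N = false) //; lia.
Qed.

End CoboundaryOnFunctions.

Section DoubleCoboundary.
Variables (K : fieldType) (Gamma : zmodType) (eps : Gamma -> Gamma -> K)
  (A : lmodType K) (HA : Gamma -> pred A) (br : A -> A -> A) (alpha : A -> A)
  (M : lmodType K) (act : A -> M -> M) (beta : M -> M)
  (r m : nat) (gam : Gamma) (f : seq A -> M) (X : nat -> Gamma * A).
Hypothesis eps_neq0 : forall a b, eps a b != 0.
Hypothesis epsK : forall a b, eps a b * eps b a = 1.
Hypothesis epsDr : forall a b c, eps a (b + c) = eps a b * eps a c.
Hypothesis epsDl : forall a b c, eps (a + b) c = eps a c * eps b c.
Hypothesis two_neq0 : (2%:R : K) != 0.
Hypothesis alpha_even : forall a x, HA a x -> HA a (alpha x).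
Hypothesis br_deg : forall a b x y, HA a x -> HA b y -> HA (a + b) (br x y).
Hypothesis br_skew : forall a b x y, HA a x -> HA b y -> br x y = - (eps a b *: br y x).
Hypothesis jacobi : forall a b c x y z, HA a x -> HA b y -> HA c z ->
  eps c a *: br (alpha x) (br y z) + eps a b *: br (alpha y) (br z x)
  + eps b c *: br (alpha z) (br x y) = 0.
Hypothesis br_lin : forall u, is_linear (br u).
Hypothesis alpha_mult : forall x y, alpha (br x y) = br (alpha x) (alpha y).
Hypothesis act_lin : forall u, is_linear (act u).
Hypothesis act_br : forall a b x y v, HA a x -> HA b y ->
  act (br x y) (beta v) = act (alpha x) (act y v) - eps a b *: act (alpha y) (act x v).
Hypothesis f_lin : forall (xs : seq A) (i : nat) (k : K) (u v : A),
  size xs = m -> (i < m)%N ->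
  f (set_nth 0 xs i (k *: u + v)) = k *: f (set_nth 0 xs i u) + f (set_nth 0 xs i v).
Hypothesis f_alpha : forall xs : seq A, size xs = m -> f (map alpha xs) = beta (f xs).
Hypothesis X_homog : forall i, HA (X i).1 (X i).2.
Hypothesis r_gt0 : (0 < r)%N.

Lemma epsC a b : eps b a = (eps a b)^-1.
Proof. by apply: (mulfI (eps_neq0 a b)); rewrite epsK divff. Qed.

Lemma signS n : (0 < n)%N -> (-1) ^+ n = - (-1) ^+ n.-1 :> K.
Proof. by case: n => // n _; rewrite exprS mulN1r. Qed.

Lemma act0 u : act u 0 = 0.
Proof.
have h := act_lin u 1 0 0; rewrite !scale1r addr0 in h.
by apply: (addrI (act u 0)); rewrite addr0 -h.
Qed.

Lemma actD u v w : act u (v + w) = act u v + act u w.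
Proof. by have := act_lin u 1 v w; rewrite !scale1r. Qed.

Lemma actZ u k v : act u (k *: v) = k *: act u v.
Proof. by have := act_lin u k v 0; rewrite !addr0 act0 addr0. Qed.

Lemma act_sum u I (s : seq I) (P : pred I) (F : I -> M) :
  act u (\sum_(i <- s | P i) F i) = \sum_(i <- s | P i) act u (F i).
Proof. exact: (big_morph (act u) (actD u) (act0 u)). Qed.

Lemma br0r u : br u 0 = 0.
Proof.
have h := br_lin u 1 0 0; rewrite !scale1r addr0 in h.
by apply: (addrI (br u 0)); rewrite addr0 -h.
Qed.

Lemma brZr u k v : br u (k *: v) = k *: br u v.
Proof. by have := br_lin u k v 0; rewrite !addr0 br0r addr0. Qed.

Lemma brNr u v : br u (- v) = - br u v.
Proof. by rewrite -scaleN1r brZr scaleN1r. Qed.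

Lemma iter_alpha_even k a x : HA a x -> HA a (iter k alpha x).
Proof. by elim: k => //= k IH /IH; apply: alpha_even. Qed.

Lemma iter_alpha_br k x y :
  iter k alpha (br x y) = br (iter k alpha x) (iter k alpha y).
Proof. by elim: k => //= k ->; rewrite alpha_mult. Qed.

Local Notation d i := (X i).1.
Local Notation x i := (X i).2.
Local Notation Y s t := (contract br alpha X s t).
Local Notation Xb u := (fun j => X (bump u j)).

Definition phi (H : nat -> A) : M := f (mkseq H m).
Definition q : nat := (r + m).-1.

Lemma phi_ext G1 G2 : (forall j, G1 j = G2 j) -> phi G1 = phi G2.
Proof. by move=> h; rewrite /phi (eq_mkseq h). Qed.

Lemma phi_alpha G : phi (fun j => alpha (G j)) = beta (phi G).
Proof. by rewrite /phi -map_mkseq f_alpha ?size_mkseq. Qed.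

Definition bb_term s t s' t' : M :=
  (coef_br eps X s t * coef_br eps (Y s t) s' t') *:
    phi (fun j => (contract br alpha (Y s t) s' t' j).2).
Definition ba_term s t u : M :=
  (coef_br eps X s t * coef_act eps gam (Y s t) u) *:
    act (iter q alpha (Y s t u).2) (phi (fun j => (Y s t (bump u j)).2)).
Definition ab_term u s' t' : M :=
  (coef_act eps gam X u * coef_br eps (Xb u) s' t') *:
    act (iter q.+1 alpha (x u)) (phi (fun j => (contract br alpha (Xb u) s' t' j).2)).
Definition aa_term u v : M :=
  (coef_act eps gam X u * coef_act eps gam (Xb u) v) *:
    act (iter q.+1 alpha (x u))
      (act (iter q alpha (Xb u v).2) (phi (fun j => (Xb u (bump v j)).2))).

Lemma double_delta_expand :
  delta eps br alpha act r m.+1 gam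
    (delta eps br alpha act r m gam (fun ys => f (map snd ys))) (mkseq X m.+2) =
  (\sum_(t < m.+2) \sum_(s < t) \sum_(t' < m.+1) \sum_(s' < t') bb_term s t s' t'
  + \sum_(t < m.+2) \sum_(s < t) \sum_(u < m.+1) ba_term s t u)
  + (\sum_(u < m.+2) \sum_(t' < m.+1) \sum_(s' < t') ab_term u s' t'
  + \sum_(u < m.+2) \sum_(v < m.+1) aa_term u v).
Proof.
have hq : (r + m.+1).-1 = q.+1 by rewrite /q; lia.
rewrite delta_mkseq hq.
under eq_bigr => t _ do under eq_bigr => s _ do rewrite delta_mkseq scalerDr.
under eq_bigr => t _ do rewrite big_split.
under [Z in _ + Z]eq_bigr => u _ do rewrite delta_mkseq actD scalerDr.
rewrite !big_split; congr ((_ + _) + (_ + _)).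
- apply: eq_bigr => t _; apply: eq_bigr => s _; rewrite scaler_sumr.
  apply: eq_bigr => t' _; rewrite scaler_sumr; apply: eq_bigr => s' _.
  by rewrite scalerA /bb_term map_mkseq.
- apply: eq_bigr => t _; apply: eq_bigr => s _; rewrite scaler_sumr.
  by apply: eq_bigr => u _; rewrite scalerA /ba_term map_mkseq.
- apply: eq_bigr => u _; rewrite act_sum scaler_sumr; apply: eq_bigr => t' _.
  rewrite act_sum scaler_sumr; apply: eq_bigr => s' _.
  by rewrite actZ scalerA /ab_term map_mkseq.
apply: eq_bigr => u _; rewrite act_sum scaler_sumr; apply: eq_bigr => v _.
by rewrite actZ scalerA /aa_term map_mkseq.
Qed.

Lemma coef_aa_lower s t : (s < t)%N ->
  coef_act eps gam X s * coef_act eps gam (Xb s) t.-1 =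
  - (coef_br eps X s t * coef_act eps gam (Y s t) s).
Proof.
move=> hst; have e5 : bump s t.-1 = t by rewrite /bump; lia.
rewrite /coef_act /coef_br e5 /contract eqxx /=.
rewrite -/(contract br alpha X s t) sum_contract_deg //.
rewrite (_ : (0 <= s < s)%N = false) ?addr0; last by lia.
rewrite (@sum_bump_lo _ (fun i => (X i).1) 0 s t (ltnW hst)).
rewrite (@sum_bump_mid _ (fun i => (X i).1)); last by lia.
rewrite prednK; last by lia.
case: t hst e5 => [//|t'] hst _ /=.
rewrite ?epsDl ?epsDr exprS; ring.
Qed.

Lemma coef_aa_upper s t : (s < t)%N ->
  coef_act eps gam X t * coef_act eps gam (Xb t) s =
  (coef_br eps X s t * coef_act eps gam (Y s t) s) * eps (d s) (d t).
Proof.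
move=> hst; have e4 : bump t s = s by rewrite /bump; lia.
rewrite /coef_act /coef_br e4 /contract eqxx /=.
rewrite -/(contract br alpha X s t) sum_contract_deg //.
rewrite (_ : (0 <= s < s)%N = false) ?addr0; last by lia.
rewrite !(@sum_bump_lo _ (fun i => (X i).1) 0 s t (ltnW hst)).
rewrite (@sum_split_pt _ (fun i => (X i).1) 0 s t); last by lia.
rewrite ?epsDl ?epsDr; ring.
Qed.

(* The module axiom, applied to beta of f = f of alpha, makes the BA term
   acting by [x_s, x_t] cancel the two AA terms acting by x_s and x_t. *)
Lemma module_axiom_cancel s t : (s < t)%N ->
  ba_term s t s + aa_term t s + aa_term s t.-1 = 0.
Proof.
move=> hst.
set Phi := phi (fun j => x (bump t (bump s j))).
have e1 : phi (fun j => (Y s t (bump s j)).2) = beta Phi.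
  rewrite -phi_alpha; apply: phi_ext => j; rewrite /contract.
  by have -> : (bump s j == s) = false by rewrite /bump; lia.
have e3 : phi (fun j => (Xb s (bump t.-1 j)).2) = Phi.
  by apply: phi_ext => j; rewrite bump_bump.
have e4 : bump t s = s by rewrite /bump; lia.
have e5 : bump s t.-1 = t by rewrite /bump; lia.
have eY : Y s t s = (d s + d t, br (x s) (x t)) by rewrite /contract eqxx.
rewrite /ba_term /aa_term coef_aa_lower // coef_aa_upper //.
rewrite eY e1 e3 e4 e5 /= iter_alpha_br.
rewrite (act_br _ (iter_alpha_even q (X_homog s)) (iter_alpha_even q (X_homog t))).
by rewrite -!iterS scalerBr scalerA subrK scaleNr subrr.
Qed.

Lemma aa_ba_diag_vanish :
  \sum_(t < m.+2) \sum_(s < t) ba_term s t s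
  + \sum_(u < m.+2) \sum_(v < m.+1) aa_term u v = 0.
Proof.
have eAA u : (u < m.+2)%N -> \sum_(v < m.+1) aa_term u v =
   \sum_(w < m.+2) ((if (w < u)%N then aa_term u w else 0)
                    + (if (u < w)%N then aa_term u w.-1 else 0)).
  move=> hu; rewrite (@sum_skip _ m.+1 u); last by lia.
  apply: eq_bigr => w _; case: eqP => [->|ne]; first by rewrite ltnn addr0.
  case: (ltngtP w u) => h; rewrite ?addr0 ?add0r; try (by move: ne h; lia).
    by congr aa_term; rewrite /unbump; lia.
  by congr aa_term; rewrite /unbump; lia.
rewrite (@sum_triangle _ m.+2 (fun s t => ba_term s t s)).
rewrite (eq_bigr _ (fun (u : 'I_m.+2) _ => eAA u (ltn_ord u))).
under [Z in _ + Z]eq_bigr => u _ do rewrite big_split.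
rewrite big_split /= [Z in _ + (_ + Z)]exchange_big /= addrA -!big_split /=.
apply: big1 => t _; rewrite -!big_split /=; apply: big1 => s _.
by case: ifP => h; [rewrite module_axiom_cancel | rewrite !addr0].
Qed.


Lemma coef_ba_ab s t w : (s < t)%N -> w != s -> w != t ->
  coef_br eps X s t * coef_act eps gam (Y s t) (unbump t w) =
  - (coef_act eps gam X w * coef_br eps (Xb w) (unbump w s) (unbump w t)).
Proof.
move=> hst hws hwt.
have eY : Y s t (unbump t w) = (d w, alpha (x w)).
  rewrite /contract (_ : (unbump t w == s) = false); last by rewrite /unbump; lia.
  by rewrite (_ : bump t (unbump t w) = w) //; rewrite /bump /unbump; lia.
have eT : bump w (unbump w t) = t by rewrite /bump /unbump; lia.
rewrite /coef_br /coef_act eY eT /= sum_contract_deg //.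
case: (ltngtP w s) => hws'; last by move: hws; rewrite hws' eqxx.
- rewrite (_ : unbump t w = w); last by rewrite /unbump; lia.
  rewrite (_ : unbump w s = s.-1); last by rewrite /unbump; lia.
  rewrite (_ : unbump w t = t.-1); last by rewrite /unbump; lia.
  rewrite (_ : (0 <= s < w)%N = false) ?addr0; last by lia.
  rewrite (@sum_bump_lo _ (fun i => (X i).1) 0 w t); last by lia.
  rewrite prednK; last by lia.
  rewrite (@sum_bump_hi _ (fun i => (X i).1) s t.-1 w); last by lia.
  rewrite prednK; last by lia.
  rewrite (signS (n := t)); last by lia.
  rewrite ?epsDl ?epsDr; ring.
case: (ltngtP w t) => hwt'; last by move: hwt; rewrite hwt' eqxx.
- rewrite (_ : unbump t w = w); last by rewrite /unbump; lia.
  rewrite (_ : unbump w s = s); last by rewrite /unbump; lia.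
  rewrite (_ : unbump w t = t.-1); last by rewrite /unbump; lia.
  rewrite (_ : (0 <= s < w)%N = true); last by lia.
  rewrite (@sum_bump_lo _ (fun i => (X i).1) 0 w t); last by lia.
  rewrite (@sum_bump_mid _ (fun i => (X i).1) s.+1 t.-1 w); last by lia.
  rewrite prednK; last by lia.
  rewrite (@sum_split_pt _ (fun i => (X i).1) s.+1 w t); last by lia.
  rewrite (signS (n := t)); last by lia.
  rewrite ?epsDl ?epsDr (epsC (d w) (d t)); field; exact: eps_neq0.
- rewrite (_ : unbump t w = w.-1); last by rewrite /unbump; lia.
  rewrite (_ : unbump w s = s); last by rewrite /unbump; lia.
  rewrite (_ : unbump w t = t); last by rewrite /unbump; lia.
  rewrite (_ : (0 <= s < w.-1)%N = true); last by lia.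
  rewrite (@sum_bump_mid _ (fun i => (X i).1) 0 w.-1 t); last by lia.
  rewrite prednK; last by lia.
  rewrite (@sum_split_pt _ (fun i => (X i).1) 0 t w); last by lia.
  rewrite (@sum_bump_lo _ (fun i => (X i).1) s.+1 t w); last by lia.
  rewrite (signS (n := w)); last by lia.
  rewrite ?epsDl ?epsDr; ring.
Qed.

(* Acting by x_w after bracketing (s, t) or bracketing (s, t) after acting
   by x_w produce the same vector with opposite signs. *)
Lemma ba_ab_cancel s t w : (s < t)%N -> w != s -> w != t ->
  ba_term s t (unbump t w) + ab_term w (unbump w s) (unbump w t) = 0.
Proof.
move=> hst hws hwt.
have eY : Y s t (unbump t w) = (d w, alpha (x w)).
  rewrite /contract (_ : (unbump t w == s) = false); last by rewrite /unbump; lia.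
  by rewrite (_ : bump t (unbump t w) = w) //; rewrite /bump /unbump; lia.
have eargs : phi (fun j => (Y s t (bump (unbump t w) j)).2) =
    phi (fun j => (contract br alpha (Xb w) (unbump w s) (unbump w t) j).2).
  apply: phi_ext => j; rewrite /contract.
  rewrite (_ : (bump (unbump t w) j == s) = (j == unbump w s)); last first.
    by rewrite /bump /unbump; lia.
  have eS : bump w (unbump w s) = s by rewrite /bump /unbump; lia.
  have eT : bump w (unbump w t) = t by rewrite /bump /unbump; lia.
  case: ifP => _ /=; first by rewrite eS eT.
  by congr (alpha (X _).2); rewrite /bump /unbump; lia.
rewrite /ba_term /ab_term eY eargs coef_ba_ab //=.
by rewrite -iterSr scaleNr addNr.
Qed.

Lemma ba_offdiag_reindex :
  \sum_(t < m.+2) \sum_(s < t) \sum_(u < m.+1)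
     (if (u == s :> nat) then 0 else ba_term s t u)
  = \sum_(t < m.+2) \sum_(s < m.+2) \sum_(w < m.+2)
      (if [&& (s < t)%N, (w != s :> nat) & (w != t :> nat)]
       then ba_term s t (unbump t w) else 0).
Proof.
rewrite (@sum_triangle _ m.+2 (fun s t => \sum_(u < m.+1)
  (if (u == s :> nat) then 0 else ba_term s t u))).
apply: eq_bigr => t _; apply: eq_bigr => s _.
case: ifP => hst; last by rewrite big1.
rewrite (@sum_skip _ m.+1 t (fun u => if u == s then 0 else ba_term s t u));
  last by have := ltn_ord t; lia.
apply: eq_bigr => w _ /=.
case: eqP => [e|hwt]; first by rewrite e ?eqxx /= andbF.
have -> : (unbump t w == s) = (w == s :> nat).
  by rewrite /unbump; move/eqP: hwt; lia.
by case: eqP.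
Qed.

Lemma ab_reindex :
  \sum_(u < m.+2) \sum_(t' < m.+1) \sum_(s' < t') ab_term u s' t'
  = \sum_(w < m.+2) \sum_(t < m.+2) \sum_(s < m.+2)
      (if [&& (s < t)%N, (w != s :> nat) & (w != t :> nat)]
       then ab_term w (unbump w s) (unbump w t) else 0).
Proof.
apply: eq_bigr => w _.
have hw : (w <= m.+1)%N by have := ltn_ord w; lia.
rewrite (@sum_triangle _ m.+1 (fun s' t' => ab_term w s' t')).
rewrite (@sum_skip _ m.+1 w (fun t' => \sum_(s' < m.+1)
  (if (s' < t')%N then ab_term w s' t' else 0))) //.
apply: eq_bigr => t _.
case: eqP => [htw|htw].
  by rewrite big1 // => s _; rewrite htw eqxx /= !andbF.
rewrite (@sum_skip _ m.+1 w (fun s' =>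
  if (s' < unbump w t)%N then ab_term w s' (unbump w t) else 0)) //.
apply: eq_bigr => s _.
case: eqP => [hsw|hsw]; first by rewrite hsw eqxx /= andbF.
have -> : (unbump w s < unbump w t)%N = (s < t)%N.
  by rewrite /unbump; move/eqP: hsw; move/eqP: htw; lia.
rewrite (_ : (w != s) = true); last by apply/eqP => h; apply: hsw; rewrite h.
by rewrite (_ : (w != t) = true) ?andbT //; apply/eqP => h; apply: htw; rewrite h.
Qed.

Lemma ba_ab_vanish :
  \sum_(t < m.+2) \sum_(s < t) \sum_(u < m.+1)
     (if (u == s :> nat) then 0 else ba_term s t u)
  + \sum_(u < m.+2) \sum_(t' < m.+1) \sum_(s' < t') ab_term u s' t' = 0.
Proof.
rewrite ba_offdiag_reindex ab_reindex [Z in _ + Z]exchange_big /=.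
under [Z in _ + Z]eq_bigr => t _ do rewrite exchange_big /=.
rewrite -big_split; apply: big1 => t _; rewrite -big_split; apply: big1 => s _.
rewrite -big_split; apply: big1 => w _.
case: ifP => [/and3P[h1 h2 h3]|_]; last exact: addr0.
exact: ba_ab_cancel.
Qed.


Lemma coef_jacobi_12 i1 i2 i3 : (i1 < i2)%N -> (i2 < i3)%N ->
  coef_br eps X i1 i2 * coef_br eps (Y i1 i2) i1 i3.-1 =
  - (coef_br eps X i2 i3 * coef_br eps (Y i2 i3) i1 i2).
Proof.
move=> h12 h23.
rewrite /coef_br /contract /= (_ : (i3.-1 == i1) = false); last by lia.
rewrite eqxx (_ : bump i2 i3.-1 = i3); last by rewrite /bump; lia.
rewrite -/(contract br alpha X i1 i2) -/(contract br alpha X i2 i3).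
rewrite !sum_contract_deg //.
rewrite (_ : (i1.+1 <= i1 < i3.-1)%N = false) ?addr0; last by lia.
rewrite (_ : (i1.+1 <= i2 < i2)%N = false) ?addr0; last by lia.
rewrite (@sum_bump_mid _ (fun i => (X i).1) i1.+1 i3.-1 i2); last by lia.
rewrite prednK; last by lia.
rewrite (@sum_bump_lo _ (fun i => (X i).1) i1.+1 i2 i3); last by lia.
rewrite (signS (n := i3)); last by lia.
rewrite ?epsDl ?epsDr; ring.
Qed.

Lemma coef_jacobi_13 i1 i2 i3 : (i1 < i2)%N -> (i2 < i3)%N ->
  coef_br eps X i1 i3 * coef_br eps (Y i1 i3) i1 i2 =
  (coef_br eps X i2 i3 * coef_br eps (Y i2 i3) i1 i2) * eps (d i2) (d i3).
Proof.
move=> h12 h23.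
rewrite /coef_br /contract /= (_ : (i2 == i1) = false); last by lia.
rewrite eqxx (_ : bump i3 i2 = i2); last by rewrite /bump; lia.
rewrite -/(contract br alpha X i1 i3) -/(contract br alpha X i2 i3).
rewrite !sum_contract_deg; try lia.
rewrite !ifF ?addr0; try lia.
rewrite !(@sum_bump_lo _ (fun i => (X i).1) i1.+1 i2 i3); try lia.
rewrite (@sum_split_pt _ (fun i => (X i).1) i1.+1 i2 i3); last by lia.
rewrite ?epsDl ?epsDr; ring.
Qed.

Lemma f_set0 (l : seq A) i : size l = m -> (i < m)%N -> f (set_nth 0 l i 0) = 0.
Proof.
move=> hl hi; have h := f_lin 1 0 0 hl hi; rewrite !scale1r addr0 in h.
by apply: (addrI (f (set_nth 0 l i 0))); rewrite addr0 -h.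
Qed.

Lemma f_setD (l : seq A) i u v : size l = m -> (i < m)%N ->
  f (set_nth 0 l i (u + v)) = f (set_nth 0 l i u) + f (set_nth 0 l i v).
Proof. by move=> hl hi; have := f_lin 1 u v hl hi; rewrite !scale1r. Qed.

Lemma f_setZ (l : seq A) i k u : size l = m -> (i < m)%N ->
  f (set_nth 0 l i (k *: u)) = k *: f (set_nth 0 l i u).
Proof. by move=> hl hi; have := f_lin k u 0 hl hi; rewrite !addr0 f_set0 ?addr0. Qed.

Lemma phi_set i T B : (i < m)%N ->
  phi (fun j => if j == i then T else B j) = f (set_nth 0 (mkseq B m) i T).
Proof.
move=> hi; rewrite /phi; congr f.
apply: (@eq_from_nth _ 0); first by rewrite size_set_nth !size_mkseq; lia.
by move=> k; rewrite size_mkseq => hk; rewrite nth_set_nth /= !nth_mkseq.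
Qed.

Local Notation rest i2 i3 := (fun j => alpha (alpha (x (bump i3 (bump i2 j))))).

Lemma jacobi_triple_args i1 i2 i3 :
  (i1 < i2)%N -> (i2 < i3)%N -> (i3 < m.+2)%N ->
  [/\ phi (fun j => (contract br alpha (Y i1 i2) i1 i3.-1 j).2) =
        f (set_nth 0 (mkseq (rest i2 i3) m) i1 (br (br (x i1) (x i2)) (alpha (x i3)))),
      phi (fun j => (contract br alpha (Y i1 i3) i1 i2 j).2) =
        f (set_nth 0 (mkseq (rest i2 i3) m) i1 (br (br (x i1) (x i3)) (alpha (x i2))))
    & phi (fun j => (contract br alpha (Y i2 i3) i1 i2 j).2) =
        f (set_nth 0 (mkseq (rest i2 i3) m) i1 (br (alpha (x i1)) (br (x i2) (x i3))))].
Proof.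
move=> h12 h23 h3; have h1m : (i1 < m)%N by lia.
split; rewrite -phi_set //; apply: phi_ext => j; rewrite /contract /= eqxx.
- rewrite (_ : (i3.-1 == i1) = false); last by lia.
  rewrite (_ : bump i2 i3.-1 = i3); last by rewrite /bump; lia.
  case: eqP => // /eqP hj.
  rewrite (_ : (bump i3.-1 j == i1) = false); last by rewrite /bump; move: hj; lia.
  by rewrite bump_bump.
- rewrite (_ : (i2 == i1) = false); last by lia.
  rewrite (_ : bump i3 i2 = i2); last by rewrite /bump; lia.
  case: eqP => // /eqP hj.
  by rewrite (_ : (bump i2 j == i1) = false) //; rewrite /bump; move: hj; lia.
- rewrite (_ : (i1 == i2) = false); last by lia.
  rewrite (_ : bump i3 i1 = i1); last by rewrite /bump; lia.
  case: eqP => // hj.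
  by rewrite (_ : (bump i2 j == i2) = false) //; rewrite /bump; lia.
Qed.

(* The BB terms bracketing i1 < i2 < i3 among themselves sum to f applied
   to an eps-Jacobi expression in position i1. *)
Lemma jacobi_triple i1 i2 i3 : (i1 < i2)%N -> (i2 < i3)%N -> (i3 < m.+2)%N ->
  bb_term i1 i2 i1 i3.-1 + bb_term i1 i3 i1 i2 + bb_term i2 i3 i1 i2 = 0.
Proof.
move=> h12 h23 h3; have h1m : (i1 < m)%N by lia.
have [p1 p2 p3] := jacobi_triple_args h12 h23 h3.
rewrite /bb_term p1 p2 p3 -!f_setZ ?size_mkseq // -!f_setD ?size_mkseq //.
rewrite -[RHS](@f_set0 (mkseq (rest i2 i3) m) i1) ?size_mkseq //.
congr f; congr set_nth.
rewrite coef_jacobi_12 // coef_jacobi_13 //.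
set c := coef_br eps X i2 i3 * coef_br eps (Y i2 i3) i1 i2.
have h1 := X_homog i1; have h2 := X_homog i2; have h3' := X_homog i3.
rewrite (br_skew (br_deg h1 h2) (alpha_even h3')).
rewrite (br_skew (br_deg h1 h3') (alpha_even h2)).
rewrite (br_skew h1 h3') brNr brZr.
have /(congr1 (fun v => (c * eps (d i1) (d i3)) *: v)) := jacobi h1 h2 h3'.
rewrite /= scaler0 !scalerDr !scalerA => <-.
rewrite ?scalerN ?opprK ?scaleNr ?scalerN ?opprK ?scalerA.
apply: scale3_perm.
- by rewrite -mulrA epsK mulr1.
- by rewrite ?epsDl (epsC (d i2) (d i3)); field; exact: eps_neq0.
- by rewrite epsDl mulrA.
Qed.

Lemma bb_disjoint_args s t a b :
  (s < t)%N -> (a < b)%N -> (s < a)%N -> a != t -> b != t -> forall j,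
  (contract br alpha (Y s t) (unbump t a) (unbump t b) j).2 =
  (contract br alpha (Y a b) (unbump b s) (unbump b t) j).2.
Proof.
move=> hst hab hsa hat hbt j; rewrite /contract /=.
rewrite (_ : (unbump t a == s) = false); last by rewrite /unbump; lia.
rewrite (_ : (unbump t b == s) = false); last by rewrite /unbump; lia.
rewrite (_ : (unbump b s == a) = false); last by rewrite /unbump; lia.
rewrite (_ : (unbump b t == a) = false); last by rewrite /unbump; lia.
rewrite (_ : bump t (unbump t a) = a); last by rewrite /bump /unbump; lia.
rewrite (_ : bump t (unbump t b) = b); last by rewrite /bump /unbump; lia.
rewrite (_ : bump b (unbump b s) = s); last by rewrite /bump /unbump; lia.
rewrite (_ : bump b (unbump b t) = t); last by rewrite /bump /unbump; lia.
rewrite (_ : (bump (unbump t b) j == s) = (j == unbump b s)); last first.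
  by rewrite /bump /unbump; lia.
rewrite (_ : (bump (unbump b t) j == a) = (j == unbump t a)); last first.
  by rewrite /bump /unbump; lia.
rewrite (_ : bump t (bump (unbump t b) j) = bump b (bump (unbump b t) j)); last first.
  by rewrite /bump /unbump; lia.
case: (eqVneq j (unbump t a)) => [hj|hj].
  rewrite (_ : (j == unbump b s) = false); last by rewrite hj /unbump; lia.
  by rewrite /= alpha_mult.
by case: (eqVneq j (unbump b s)) => /=; rewrite ?alpha_mult.
Qed.

Lemma coef_bb_disjoint s t a b :
  (s < t)%N -> (a < b)%N -> (s < a)%N -> a != t -> b != t ->
  coef_br eps X s t * coef_br eps (Y s t) (unbump t a) (unbump t b) =
  - (coef_br eps X a b * coef_br eps (Y a b) (unbump b s) (unbump b t)).
Proof.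
move=> hst hab hsa hat hbt; rewrite /coef_br /contract /=.
rewrite (_ : (unbump t b == s) = false); last by rewrite /unbump; lia.
rewrite (_ : (unbump b t == a) = false); last by rewrite /unbump; lia.
rewrite (_ : bump t (unbump t b) = b); last by rewrite /bump /unbump; lia.
rewrite (_ : bump b (unbump b t) = t); last by rewrite /bump /unbump; lia.
rewrite -/(contract br alpha X s t) -/(contract br alpha X a b).
rewrite !sum_contract_deg; try lia.
rewrite (unbump_lt (ltn_trans hsa hab)).
case: (ltngtP t a) => hta; last by move: hat; rewrite hta eqxx.
- have htb := ltn_trans hta hab.
  rewrite (unbump_gt hta) (unbump_gt htb) (unbump_lt htb).
  rewrite (ifF _ _ (_ : (a.-1 < s < b.-1)%N = false)); last by lia.
  rewrite (ifF _ _ (_ : (s < a < t)%N = false)) ?addr0; last by lia.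
  rewrite prednK; last by lia.
  rewrite (@sum_bump_hi _ (fun i => (X i).1) a b.-1 t); last by lia.
  rewrite (@sum_bump_lo _ (fun i => (X i).1) s.+1 t b); last by lia.
  rewrite prednK; last by lia.
  rewrite (signS (n := b)); last by lia.
  rewrite ?epsDl ?epsDr; ring.
case: (ltngtP t b) => htb; last by move: hbt; rewrite htb eqxx.
- rewrite (unbump_lt hta) (unbump_gt htb) (unbump_lt htb).
  rewrite (ifF _ _ (_ : (a < s < b.-1)%N = false)); last by lia.
  rewrite (ifT _ _ (_ : (s < a < t)%N = true)) ?addr0; last by lia.
  rewrite (@sum_bump_mid _ (fun i => (X i).1) a.+1 b.-1 t); last by lia.
  rewrite prednK; last by lia.
  rewrite (@sum_bump_lo _ (fun i => (X i).1) s.+1 t b); last by lia.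
  rewrite (@sum_split_pt _ (fun i => (X i).1) a.+1 t b); last by lia.
  rewrite (signS (n := b)); last by lia.
  rewrite ?epsDl ?epsDr (epsC (d t) (d b)); field; exact: eps_neq0.
- rewrite (unbump_lt hta) (unbump_lt htb) (unbump_gt htb).
  rewrite (ifF _ _ (_ : (a < s < b)%N = false)); last by lia.
  rewrite (ifT _ _ (_ : (s < a < t.-1)%N = true)) ?addr0; last by lia.
  rewrite (@sum_bump_lo _ (fun i => (X i).1) a.+1 b t); last by lia.
  rewrite (@sum_bump_mid _ (fun i => (X i).1) s.+1 t.-1 b); last by lia.
  rewrite prednK; last by lia.
  rewrite (@sum_split_pt _ (fun i => (X i).1) s.+1 b t); last by lia.
  rewrite (signS (n := t)); last by lia.
  rewrite ?epsDl ?epsDr; ring.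
Qed.

Definition bb_pair s t a b : M := bb_term s t (unbump t a) (unbump t b).

Lemma bb_disjoint_cancel s t a b : (s < t)%N -> (a < b)%N ->
  a != s -> a != t -> b != s -> b != t ->
  bb_pair s t a b + bb_pair a b s t = 0.
Proof.
have cancel s' t' a' b' : (s' < t')%N -> (a' < b')%N -> (s' < a')%N ->
    a' != t' -> b' != t' -> bb_pair s' t' a' b' + bb_pair a' b' s' t' = 0.
  move=> *; rewrite /bb_pair /bb_term coef_bb_disjoint //.
  by rewrite (phi_ext (bb_disjoint_args _ _ _ _ _)) // scaleNr addNr.
move=> hst hab has hat hbs hbt.
case: (ltngtP s a) => h; last by move: has; rewrite h eqxx.
  exact: cancel.
by rewrite addrC; apply: cancel => //; rewrite eq_sym.
Qed.

Definition bb_cond (t s b a : nat) : bool :=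
  [&& (s < t)%N, (a < b)%N, a != t & b != t].

Lemma bb_reindex :
  \sum_(t < m.+2) \sum_(s < t) \sum_(t' < m.+1) \sum_(s' < t') bb_term s t s' t' =
  \sum_(t < m.+2) \sum_(s < m.+2) \sum_(b < m.+2) \sum_(a < m.+2)
    (if bb_cond t s b a then bb_pair s t a b else 0).
Proof.
rewrite /bb_cond (@sum_triangle _ m.+2
  (fun s t => \sum_(t' < m.+1) \sum_(s' < t') bb_term s t s' t')).
apply: eq_bigr => t _; apply: eq_bigr => s _.
case: ifP => hst; last by rewrite big1 // => b _; rewrite big1.
have ht : (t <= m.+1)%N by have := ltn_ord t; lia.
rewrite (@sum_triangle _ m.+1 (fun s' t' => bb_term s t s' t')).
rewrite (@sum_skip _ m.+1 t (fun t' => \sum_(s' < m.+1)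
  (if (s' < t')%N then bb_term s t s' t' else 0))) //.
apply: eq_bigr => b _.
case: eqP => [hbt|hbt].
  by rewrite big1 // => a _; rewrite hbt ?eqxx /= ?andbF.
rewrite (@sum_skip _ m.+1 t (fun s' =>
  if (s' < unbump t b)%N then bb_term s t s' (unbump t b) else 0)) //.
apply: eq_bigr => a _.
case: eqP => [hat|hat]; first by rewrite hat ?eqxx /= ?andbF.
have -> : (unbump t a < unbump t b)%N = (a < b)%N.
  by rewrite /unbump; move/eqP: hat; move/eqP: hbt; lia.
by rewrite /= ?andbT.
Qed.

(* The terms with disjoint brackets form a sum S with S = - S. *)
Lemma bb_disjoint_vanish :
  \sum_(t < m.+2) \sum_(s < m.+2) \sum_(b < m.+2) \sum_(a < m.+2)
    (if [&& bb_cond t s b a, ~~ (a == s :> nat) & ~~ (b == s :> nat)]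
     then bb_pair s t a b else 0) = 0.
Proof.
set S := LHS.
have hS : S + S = 0.
  rewrite {2}/S (@sum4_swap _ _ (fun t s b a : nat =>
    if [&& bb_cond t s b a, ~~ (a == s) & ~~ (b == s)] then bb_pair s t a b else 0)).
  rewrite /S -!big_split; apply: big1 => t _; rewrite -!big_split.
  apply: big1 => s _; rewrite -!big_split; apply: big1 => b _; rewrite -!big_split.
  apply: big1 => a _; rewrite /bb_cond.
  case: ifP => h; last first.
    by case: ifP => h'; [move: h h'; lia | apply: addr0].
  case: ifP => h'; last by move: h h'; lia.
  move: h => /and3P[/and4P[h1 h2 h3 h4] h5 h6].
  by apply: bb_disjoint_cancel => //; move: h5 h6; lia.
have : (2%:R : K) *: S = 0 by rewrite scaler_nat mulr2n.
by move/eqP; rewrite scaler_eq0 (negbTE two_neq0) /= => /eqP.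
Qed.

Lemma bb_shared_lower :
  \sum_(t < m.+2) \sum_(s < m.+2) \sum_(b < m.+2) \sum_(a < m.+2)
    (if bb_cond t s b a && (a == s :> nat) then bb_pair s t a b else 0) =
  \sum_(i < m.+2) \sum_(j < m.+2) \sum_(k < m.+2)
    (if (i < j < k)%N then bb_pair i j i k else 0)
  + \sum_(i < m.+2) \sum_(j < m.+2) \sum_(k < m.+2)
    (if (i < j < k)%N then bb_pair i k i j else 0).
Proof.
have -> : \sum_(t < m.+2) \sum_(s < m.+2) \sum_(b < m.+2) \sum_(a < m.+2)
    (if bb_cond t s b a && (a == s :> nat) then bb_pair s t a b else 0) =
  \sum_(t < m.+2) \sum_(s < m.+2) \sum_(b < m.+2)
    ((if (s < t < b)%N then bb_pair s t s b else 0) +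
     (if (s < b < t)%N then bb_pair s t s b else 0)).
  apply: eq_bigr => t _; apply: eq_bigr => s _; apply: eq_bigr => b _.
  rewrite (eq_bigr (fun a : 'I_m.+2 => if (a == s :> nat) then
      (if [&& (s < t)%N, (s < b)%N & (b != t :> nat)] then bb_pair s t s b
       else 0) else 0)); last first.
    move=> a _; rewrite /bb_cond; case: (eqVneq (a : nat) s) => [->|ne].
      by rewrite andbT; case: ifP => h; case: ifP => h' //; move: h h'; lia.
    by rewrite andbF.
  rewrite (@sum_ord_pick _ m.+2 s (fun _ => if [&& (s < t)%N, (s < b)%N &
    (b != t :> nat)] then bb_pair s t s b else 0)) //.
  by case: ifP => h; case: ifP => h1; case: ifP => h2;
     rewrite ?addr0 ?add0r //; move: h h1 h2; lia.
under eq_bigr => t _ do under eq_bigr => s _ do rewrite big_split.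
under eq_bigr => t _ do rewrite big_split.
rewrite big_split; congr (_ + _); first by rewrite exchange_big.
by rewrite exchange_big; under eq_bigr => i _ do rewrite exchange_big.
Qed.

Lemma bb_shared_upper :
  \sum_(t < m.+2) \sum_(s < m.+2) \sum_(b < m.+2) \sum_(a < m.+2)
    (if bb_cond t s b a && (b == s :> nat) then bb_pair s t a b else 0) =
  \sum_(i < m.+2) \sum_(j < m.+2) \sum_(k < m.+2)
    (if (i < j < k)%N then bb_pair j k i j else 0).
Proof.
have -> : \sum_(t < m.+2) \sum_(s < m.+2) \sum_(b < m.+2) \sum_(a < m.+2)
    (if bb_cond t s b a && (b == s :> nat) then bb_pair s t a b else 0) =
  \sum_(t < m.+2) \sum_(s < m.+2) \sum_(a < m.+2)
    (if (a < s < t)%N then bb_pair s t a s else 0).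
  apply: eq_bigr => t _; apply: eq_bigr => s _; rewrite exchange_big.
  apply: eq_bigr => a _.
  rewrite (eq_bigr (fun b : 'I_m.+2 => if (b == s :> nat) then
      (if (a < s < t)%N then bb_pair s t a s else 0) else 0)); last first.
    move=> b _; rewrite /bb_cond; case: (eqVneq (b : nat) s) => [->|ne].
      by rewrite andbT; case: ifP => h; case: ifP => h' //; move: h h'; lia.
    by rewrite andbF.
  by rewrite (@sum_ord_pick _ m.+2 s (fun _ =>
       if (a < s < t)%N then bb_pair s t a s else 0)).
under eq_bigr => t _ do rewrite exchange_big.
by rewrite exchange_big; under eq_bigr => i _ do rewrite exchange_big.
Qed.

(* The BB terms vanish: regrouping shared-index terms into Jacobi triples. *)
Lemma bb_vanish :
  \sum_(t < m.+2) \sum_(s < t) \sum_(t' < m.+1) \sum_(s' < t') bb_term s t s' t' = 0.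
Proof.
rewrite bb_reindex.
rewrite (@sum4_split3 _ m.+2 (fun t s b a : nat =>
    if bb_cond t s b a then bb_pair s t a b else 0)
  (fun t s b a : nat => if bb_cond t s b a && (a == s) then bb_pair s t a b else 0)
  (fun t s b a : nat => if bb_cond t s b a && (b == s) then bb_pair s t a b else 0)
  (fun t s b a : nat => if [&& bb_cond t s b a, ~~ (a == s) & ~~ (b == s)]
                        then bb_pair s t a b else 0)); last first.
  move=> t s b a; apply: if_split3 => /and4P[_ hab _ _].
  by apply/negP => /andP[/eqP ha /eqP hb]; rewrite ha hb ltnn in hab.
rewrite bb_disjoint_vanish addr0 bb_shared_lower bb_shared_upper.
rewrite -!big_split; apply: big1 => i _; rewrite -!big_split; apply: big1 => j _.
rewrite -!big_split; apply: big1 => k _ /=.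
case: ifP => [/andP[hij hjk]|_]; last by rewrite !addr0.
rewrite /bb_pair (unbump_lt hij) (unbump_gt hjk) (unbump_lt (ltn_trans hij hjk)).
by rewrite (unbump_lt hjk) jacobi_triple.
Qed.

Lemma double_delta_vanish :
  delta eps br alpha act r m.+1 gam
    (delta eps br alpha act r m gam (fun ys => f (map snd ys))) (mkseq X m.+2) = 0.
Proof.
have split_diag : \sum_(t < m.+2) \sum_(s < t) \sum_(u < m.+1) ba_term s t u =
  \sum_(t < m.+2) \sum_(s < t) ba_term s t s +
  \sum_(t < m.+2) \sum_(s < t) \sum_(u < m.+1)
    (if (u == s :> nat) then 0 else ba_term s t u).
  rewrite -big_split; apply: eq_bigr => t _; rewrite -big_split.
  apply: eq_bigr => s _ /=.
  have hs : (s < m.+1)%N by have := ltn_ord s; have := ltn_ord t; lia.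
  rewrite -(@sum_ord_pick _ m.+1 s (fun u => ba_term s t u)) // -big_split.
  by apply: eq_bigr => u _; case: ifP => _; rewrite /= ?addr0 ?add0r.
rewrite double_delta_expand split_diag bb_vanish add0r.
by rewrite [X in _ + X]addrC addrACA aa_ba_diag_vanish ba_ab_vanish addr0.
Qed.

End DoubleCoboundary.

Theorem mainTheorem6 (K : fieldType) (Gamma : zmodType)
    (eps : Gamma -> Gamma -> K)
    (A : lmodType K) (HA : Gamma -> pred A) (br : A -> A -> A) (alpha : A -> A)
    (M : lmodType K) (HM : Gamma -> pred M) (act : A -> M -> M) (beta : M -> M)
    (n r : nat) (gam : Gamma) (f : seq A -> M) :
  [pchar K] =i pred0 ->
  skew_bicharacter eps ->
  multiplicative_color_HomLie eps HA br alpha ->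
  HomLie_module eps HA br alpha HM act beta ->
  (2 <= n)%N -> (1 <= r)%N ->
  cochain_ab eps HA alpha HM beta n.-1 gam f ->
  forall xs : seq (Gamma * A), size xs = n.+1 -> homog HA xs ->
    delta eps br alpha act r n gam
      (delta eps br alpha act r n.-1 gam (fun ys => f (map snd ys))) xs = 0.
Proof.
move=> char0 [eps_neq0 epsK epsDr epsDl].
move=> [[gradA [br_lin _] _ alpha_even br_deg] [br_skew jacobi alpha_mult]].
move=> [[_ [act_lin _] _ _ _] [_ act_br]] n_ge2 r_gt0 [f_lin _ _ f_alpha] xs.
have two_neq0 : (2%:R : K) != 0.
  by apply/negP => h2; have := char0 2%N; rewrite !inE /= h2.
case: n n_ge2 f_lin f_alpha => [//|m] _ f_lin f_alpha size_xs homog_xs.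
(* Out-of-range positions hold 0, which is homogeneous of degree 0. *)
pose X := nth (0, 0) xs.
have X_homog i : HA (X i).1 (X i).2.
  case: (ltnP i (size xs)) => hi; first exact: (all_nthP _ homog_xs).
  by rewrite /X nth_default //=; case: gradA => /(_ 0) [].
have -> : xs = mkseq X m.+2 by rewrite /X -size_xs mkseq_nth.
exact: (double_delta_vanish gam eps_neq0 epsK epsDr epsDl two_neq0 alpha_even
  br_deg br_skew jacobi br_lin alpha_mult act_lin act_br f_lin f_alpha X_homog r_gt0).
Qed.
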